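(* Let $n\ge 2$ and let $u\in C^4$ be a $2$-convex solution of $\sigma_2(D^2u)=1$ on an open set in $\mathbb{R}^n$. At any point where $D^2u$ is diagonal with $u_{11}\ge u_{22}\ge\cdots\ge u_{nn}$, one has $$-\sum_{i\neq j}u_{ii1}u_{jj1}\ \ge\ \frac{2(n-1)\,u_{111}^2}{(n-1)u_{11}^2+2(n-2)}.$$
   Context: Subscripts denote partial derivatives, e.g. $u_{ij1}=\partial^3u/\partial x_i\partial x_j\partial x_1$. $\sigma_2(D^2u)$ is the second elementary symmetric function of the eigenvalues of $D^2u$. A function is $2$-convex if the eigenvalues $\lambda$ of its Hessian satisfy $\sigma_1(\lambda)>0$, $\sigma_2(\lambda)>0$ everywhere. *)

From mathcomp Require Import all_boot.
From Stdlib Require Import Reals.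
Set Implicit Arguments. Unset Strict Implicit. Unset Printing Implicit Defensive.

Open Scope R_scope.

Definition pt (n : nat) := 'I_n -> R.

Definition upd (n : nat) (x : pt n) (i : 'I_n) (t : R) : pt n :=
  fun j => if j == i then t else x j.

Definition near (n : nat) (x y : pt n) (d : R) : Prop :=
  forall j : 'I_n, Rabs (y j - x j) < d.

Definition is_open (n : nat) (U : pt n -> Prop) : Prop :=
  forall x, U x -> exists d, 0 < d /\ forall y, near x y d -> U y.

Definition cont_on (n : nat) (f : pt n -> R) (U : pt n -> Prop) : Prop :=
  forall x, U x -> forall eps, 0 < eps ->
    exists d, 0 < d /\ forall y, U y -> near x y d -> Rabs (f y - f x) < eps.

Definition is_partial (n : nat) (f : pt n -> R) (i : 'I_n) (g : pt n -> R)
  (U : pt n -> Prop) : Prop :=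
  forall x, U x -> derivable_pt_lim (fun t => f (upd x i t)) (x i) (g x).

Fixpoint Ck (n : nat) (k : nat) (f : pt n -> R) (U : pt n -> Prop) : Prop :=
  cont_on f U /\
  match k with
  | O => True
  | S k' => forall i : 'I_n, exists g, is_partial f i g U /\ Ck k' g U
  end.

(* sigma_1 and sigma_2 of the eigenvalues of a square matrix A, written as
   the trace and the sum of principal 2x2 minors respectively. *)
Definition sigma1 (n : nat) (A : 'I_n -> 'I_n -> R) : R :=
  \big[Rplus/0]_(i < n) A i i.

Definition sigma2 (n : nat) (A : 'I_n -> 'I_n -> R) : R :=
  \big[Rplus/0]_(i < n) \big[Rplus/0]_(j < n | ltn i j)
     (A i i * A j j - A i j * A j i).

From HB Require Import structures.
From mathcomp Require Import all_boot.
From Stdlib Require Import Reals Lra FunctionalExtensionality.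
Set Implicit Arguments.
Unset Strict Implicit.
Open Scope R_scope.

(* Let lambda_i = u_ii and a_i = u_ii1 at the point.  Differentiating
   sigma_2(D^2 u) = 1 in x_1 gives sum_i a_i (sigma_1 - lambda_i) = 0, and the
   equation itself gives sigma_1^2 - sum_i lambda_i^2 = 2.  Since
   -sum_(i<>j) a_i a_j = sum_i a_i^2 - (sum_i a_i)^2, the bound follows by
   expanding 0 <= sum_i (a_i + p + k lambda_i + r delta_i1)^2 with these two
   constraints and choosing the multipliers p, k, r optimally. *)

HB.instance Definition _ :=
  Monoid.isComLaw.Build R 0 Rplus (fun a b c => esym (Rplus_assoc a b c)) Rplus_comm Rplus_0_l.
HB.instance Definition _ := Monoid.isMulLaw.Build R 0 Rmult Rmult_0_l Rmult_0_r.
HB.instance Definition _ := Monoid.isAddLaw.Build R Rmult Rplus Rmult_plus_distr_r Rmult_plus_distr_l.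

Local Notation "\sum_ ( i < n ) F" := (\big[Rplus/0]_(i < n) F) : R_scope.
Local Notation "\sum_ ( i < n | P ) F" := (\big[Rplus/0]_(i < n | P) F) : R_scope.

Section RealSums.
Variable n : nat.
Implicit Types (a b : 'I_n -> R) (F : 'I_n -> 'I_n -> R).

Lemma sumR_const (c : R) : \sum_(i < n) c = INR n * c.
Proof.
rewrite big_const_ord; elim: n => [|m IH]; first by rewrite /=; ring.
by rewrite iterS IH S_INR; ring.
Qed.

Lemma sumR_pred1 (i1 : 'I_n) (G : 'I_n -> R) :
  \sum_(i < n) (if i == i1 then G i else 0) = G i1.
Proof. by rewrite -big_mkcond big_pred1_eq. Qed.

Lemma sumR_ge0 a : (forall i, 0 <= a i) -> 0 <= \sum_(i < n) a i.
Proof. by move=> a_ge0; elim/big_rec: _ => [|i s _ s_ge0]; [lra | have := a_ge0 i; lra]. Qed.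

Lemma sumR_offdiag_mul a b :
  \sum_(i < n) \sum_(j < n | i != j) a i * b j =
  (\sum_(i < n) a i) * (\sum_(i < n) b i) - \sum_(i < n) a i * b i.
Proof.
have -> : (\sum_(i < n) a i) * (\sum_(i < n) b i) =
          \sum_(i < n) (a i * b i + \sum_(j < n | i != j) a i * b j).
  rewrite big_distrl; apply: eq_bigr => i _ /=.
  rewrite (bigD1 i) //= Rmult_plus_distr_l big_distrr /=.
  by congr (_ + _); apply: eq_bigl => j; rewrite eq_sym.
by rewrite big_split /=; ring.
Qed.

Lemma sumR_lt_pairs F :
  \sum_(i < n) \sum_(j < n | ltn i j) (F i j + F j i) =
  \sum_(i < n) \sum_(j < n | i != j) F i j.
Proof.
have swap : \sum_(i < n) \sum_(j < n | ltn i j) F j i =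
            \sum_(i < n) \sum_(j < n | ltn j i) F i j.
  rewrite (eq_bigr (fun i : 'I_n => \sum_(j < n) if ltn i j then F j i else 0));
    last by move=> i _; rewrite big_mkcond.
  by rewrite exchange_big /=; apply: eq_bigr => i _; rewrite [RHS]big_mkcond.
rewrite (eq_bigr _ (fun i _ => big_split _ _ _ _ _)) big_split /= swap -big_split /=.
apply: eq_bigr => i _.
rewrite [RHS](bigID (fun j : 'I_n => ltn i j)) /=.
by congr (_ + _); apply: eq_bigl => j; rewrite -(inj_eq val_inj) /=; case: ltngtP.
Qed.


Lemma sumR_sq_shift (a l : 'I_n -> R) (i1 : 'I_n) (p k r : R) :
  \sum_(i < n) (a i + p + k * l i + (if i == i1 then r else 0)) ^ 2 =
  \sum_(i < n) a i ^ 2 + INR n * p ^ 2 + k ^ 2 * \sum_(i < n) l i ^ 2 + r ^ 2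
  + 2 * p * \sum_(i < n) a i + 2 * k * \sum_(i < n) a i * l i + 2 * r * a i1
  + 2 * p * k * \sum_(i < n) l i + 2 * p * r + 2 * k * r * l i1.
Proof.
have expand i : (a i + p + k * l i + (if i == i1 then r else 0)) ^ 2 =
  a i ^ 2 + p ^ 2 + k ^ 2 * l i ^ 2 + 2 * p * a i + 2 * k * (a i * l i)
  + 2 * p * k * l i
  + (if i == i1 then r ^ 2 + 2 * r * a i + 2 * p * r + 2 * k * r * l i else 0).
  by case: (i == i1); ring.
rewrite (eq_bigr _ (fun i _ => expand i)) !big_split /= sumR_pred1 sumR_const.
by rewrite -!big_distrr /=; ring.
Qed.

End RealSums.

Lemma ltn_ord_neq n (i j : 'I_n) : ltn i j -> i <> j.
Proof. by move=> lt_ij eq_ij; move: lt_ij; rewrite eq_ij /ltn /= ltnn. Qed.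

Lemma sigma2_diag n (A : 'I_n -> 'I_n -> R) :
  (forall i j, i <> j -> A i j = 0) ->
  2 * sigma2 A = sigma1 A ^ 2 - \sum_(i < n) A i i ^ 2.
Proof.
move=> A_diag; rewrite /sigma2 /sigma1 big_distrr.
rewrite (eq_bigr (fun i : 'I_n => \sum_(j < n | ltn i j) (A i i * A j j + A j j * A i i))); last first.
  move=> i _; rewrite big_distrr /=; apply: eq_bigr => j /ltn_ord_neq neq_ij.
  by rewrite (A_diag i j) // (A_diag j i); [ring | exact: not_eq_sym].
rewrite (sumR_lt_pairs (fun i j => A i i * A j j)) sumR_offdiag_mul.
have -> : \sum_(i < n) A i i * A i i = \sum_(i < n) A i i ^ 2.
  by apply: eq_bigr => i _; ring.
ring.
Qed.


Lemma derivable_pt_lim_big (I : Type) (r : seq I) (P : pred I)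
    (F : I -> R -> R) (F' : I -> R) (t0 : R) :
  (forall i, P i -> derivable_pt_lim (F i) t0 (F' i)) ->
  derivable_pt_lim (fun t => \big[Rplus/0]_(i <- r | P i) F i t) t0
                   (\big[Rplus/0]_(i <- r | P i) F' i).
Proof.
move=> dF; elim: r => [|i r IH].
  rewrite big_nil; apply: (derivable_pt_lim_ext (fun _ => 0)).
    by move=> t; rewrite big_nil.
  exact: derivable_pt_lim_const.
rewrite big_cons.
apply: (derivable_pt_lim_ext
  (fun t => (if P i then F i t else 0) + \big[Rplus/0]_(j <- r | P j) F j t)).
  by move=> t; rewrite big_cons; case: (P i) => //; ring.
case Pi: (P i).
  exact: (derivable_pt_lim_plus (F i) _ _ _ _ (dF i Pi) IH).
rewrite -[X in derivable_pt_lim _ _ X]Rplus_0_l.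
apply: (derivable_pt_lim_plus (fun _ => 0)) IH; exact: derivable_pt_lim_const.
Qed.

Lemma derivable_pt_lim_sigma2_diag n (A : 'I_n -> 'I_n -> R -> R)
    (A' : 'I_n -> 'I_n -> R) (t0 : R) :
  (forall i j, derivable_pt_lim (A i j) t0 (A' i j)) ->
  (forall i j, i <> j -> A i j t0 = 0) ->
  derivable_pt_lim (fun t => sigma2 (fun i j => A i j t)) t0
    (sigma1 A' * sigma1 (fun i j => A i j t0) - \sum_(i < n) A' i i * A i i t0).
Proof.
move=> dA A_diag.
rewrite /sigma1 -sumR_offdiag_mul -(sumR_lt_pairs (fun i j => A' i i * A j j t0)).
have -> : \sum_(i < n) \sum_(j < n | ltn i j) (A' i i * A j j t0 + A' j j * A i i t0) =
  \sum_(i < n) \sum_(j < n | ltn i j)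
     (A' i i * A j j t0 + A i i t0 * A' j j - (A' i j * A j i t0 + A i j t0 * A' j i)).
  apply: eq_bigr => i _; apply: eq_bigr => j /ltn_ord_neq neq_ij.
  by rewrite (A_diag i j) // (A_diag j i); [ring | exact: not_eq_sym].
apply: derivable_pt_lim_big => i _; apply: derivable_pt_lim_big => j _.
exact: derivable_pt_lim_minus (derivable_pt_lim_mult _ _ _ _ _ (dA i i) (dA j j))
                              (derivable_pt_lim_mult _ _ _ _ _ (dA i j) (dA j i)).
Qed.

Lemma derivable_pt_lim_locally_const (f : R -> R) (t0 c d l : R) : 0 < d ->
  (forall t, Rabs (t - t0) < d -> f t = c) -> derivable_pt_lim f t0 l -> l = 0.
Proof.
move=> d_gt0 f_const df.
apply: (uniqueness_limite f t0) df _.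
apply: (derivable_pt_lim_locally_ext (fun _ => c) f t0 (t0 - d) (t0 + d)); first lra.
  by move=> t t_near; rewrite f_const //; apply: Rabs_def1; lra.
exact: derivable_pt_lim_const.
Qed.

Lemma upd_id n (x : pt n) (i : 'I_n) : upd x i (x i) = x.
Proof. by apply: functional_extensionality => j; rewrite /upd; case: eqP => [->|]. Qed.

Lemma near_upd n (x : pt n) (i : 'I_n) (t d : R) : 0 < d ->
  Rabs (t - x i) < d -> near x (upd x i t) d.
Proof.
move=> d_gt0 t_near j; rewrite /upd; case: eqP => [->|_] //.
by rewrite Rminus_diag Rabs_R0.
Qed.
Lemma quadratic_form_bound (A E s f m N : R) : s <> 0 -> N <> 1 ->
  (forall p k r, 0 <= A + N * p ^ 2 + k ^ 2 * (s ^ 2 - 2) + r ^ 2 + 2 * p * E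
     + 2 * k * (E * s) + 2 * r * f + 2 * p * k * s + 2 * p * r + 2 * k * r * m) ->
  2 * (N - 1) * f ^ 2 / ((N - 1) * m ^ 2 + 2 * (N - 2)) <= A - E ^ 2.
Proof.
move=> s_neq0 N_neq1 form_ge0.
have N1_neq0 : N - 1 <> 0 by lra.
set D := (N - 1) * m ^ 2 + 2 * (N - 2).
pose r := - 2 * (N - 1) * f / D.
pose p := - r / (N - 1).
pose c := E + p + r * m * s / 2.
have optimal_pr : (N - 1) * p ^ 2 + 2 * p * r + r ^ 2 * (1 + m ^ 2 / 2) + 2 * r * f
                  = - (2 * (N - 1) * f ^ 2 / D).
  (* When D = 0, division by zero makes r = p = 0 and both sides vanish. *)
  have [D0 | D_neq0] := Req_dec D 0.
    by rewrite /p /r D0 !Rdiv_0_r; field.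
  by rewrite /p /r /D in D_neq0 *; field.
(* The form equals A - E^2 + [the quadratic in p, r above]
   + (E + p + k s)^2 - 2 (k - r m / 2)^2; this k kills the first square. *)
have := form_ge0 p (r * m / 2 - c / s) r.
have -> : A + N * p ^ 2 + (r * m / 2 - c / s) ^ 2 * (s ^ 2 - 2) + r ^ 2 + 2 * p * E
     + 2 * (r * m / 2 - c / s) * (E * s) + 2 * r * f + 2 * p * (r * m / 2 - c / s) * s
     + 2 * p * r + 2 * (r * m / 2 - c / s) * r * m
  = A - E ^ 2 + ((N - 1) * p ^ 2 + 2 * p * r + r ^ 2 * (1 + m ^ 2 / 2) + 2 * r * f)
    - 2 * (c / s) ^ 2.
  by rewrite /c; field.
rewrite optimal_pr; have := pow2_ge_0 (c / s); lra.
Qed.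

Lemma sumR_offdiag_sq_bound n (a l : 'I_n -> R) (i1 : 'I_n) :
  n <> 1%nat -> \sum_(i < n) l i <> 0 ->
  (\sum_(i < n) l i) ^ 2 - \sum_(i < n) l i ^ 2 = 2 ->
  (\sum_(i < n) a i) * (\sum_(i < n) l i) = \sum_(i < n) a i * l i ->
  2 * (INR n - 1) * a i1 ^ 2 / ((INR n - 1) * l i1 ^ 2 + 2 * (INR n - 2))
  <= - \sum_(i < n) \sum_(j < n | i != j) a i * a j.
Proof.
move=> n_neq1 sum_l_neq0 sum_sq_l sum_al.
rewrite sumR_offdiag_mul.
have -> : \sum_(i < n) a i * a i = \sum_(i < n) a i ^ 2 by apply: eq_bigr => i _; ring.
have -> : - ((\sum_(i < n) a i) * (\sum_(i < n) a i) - \sum_(i < n) a i ^ 2) =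
          \sum_(i < n) a i ^ 2 - (\sum_(i < n) a i) ^ 2 by ring.
apply: (quadratic_form_bound (s := \sum_(i < n) l i)) => // [|p k r]; first exact: not_1_INR.
rewrite sum_al (_ : _ ^ 2 - 2 = \sum_(i < n) l i ^ 2); last lra.
rewrite -(sumR_sq_shift a l i1 p k r).
by apply: sumR_ge0 => i; apply: pow2_ge_0.
Qed.

Theorem corollary2p1 (n : nat) (hn : leq 2 n)
  (U : pt n -> Prop) (hU : is_open U)
  (u : pt n -> R)
  (D1 : 'I_n -> pt n -> R)
  (D2 : 'I_n -> 'I_n -> pt n -> R)
  (D3 : 'I_n -> 'I_n -> 'I_n -> pt n -> R)
  (hC4 : Ck 4 u U)
  (hD1 : forall i, is_partial u i (D1 i) U)
  (hD2 : forall i j, is_partial (D1 i) j (D2 i j) U)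
  (hD3 : forall i j k, is_partial (D2 i j) k (D3 i j k) U)
  (h2conv : forall y, U y -> 0 < sigma1 (fun i j => D2 i j y) /\
                             0 < sigma2 (fun i j => D2 i j y))
  (heq : forall y, U y -> sigma2 (fun i j => D2 i j y) = 1)
  (x : pt n) (hx : U x)
  (hdiag : forall i j : 'I_n, i <> j -> D2 i j x = 0)
  (hord : forall i j : 'I_n, leq i j -> D2 j j x <= D2 i i x)
  (i1 : 'I_n) (hi1 : nat_of_ord i1 = 0%nat) :
  - (\big[Rplus/0]_(i < n) \big[Rplus/0]_(j < n | i != j)
        (D3 i i i1 x * D3 j j i1 x))
  >= 2 * (INR n - 1) * (D3 i1 i1 i1 x) ^ 2
     / ((INR n - 1) * (D2 i1 i1 x) ^ 2 + 2 * (INR n - 2)).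
Proof.
have [d [d_gt0 ball_U]] := hU x hx.
have x_diag i j : i <> j -> D2 i j (upd x i1 (x i1)) = 0 by rewrite upd_id; exact: hdiag.
have dsigma2 := derivable_pt_lim_sigma2_diag (fun i j => hD3 i j i1 x hx) x_diag.
rewrite upd_id in dsigma2.
have critical := derivable_pt_lim_locally_const d_gt0
  (fun t t_near => heq _ (ball_U _ (near_upd d_gt0 t_near))) dsigma2.
have sigma2_eq1 := sigma2_diag hdiag; rewrite heq // in sigma2_eq1.
apply: Rle_ge; apply: (sumR_offdiag_sq_bound (l := fun i => D2 i i x)).
- by move=> n1; rewrite n1 in hn.
- exact/Rgt_not_eq/(h2conv x hx).1.
- rewrite /sigma1 in sigma2_eq1; lra.
- rewrite /sigma1 in critical; lra.
Qed.
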